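(* Let $\mathcal{B}$ be a bounding family on $[n]^d$ with associated function $d_{\mathcal{B}}$, and let $\mathcal{D}=\prod_{r=1}^d\mathcal{D}_r$ be a product distribution on $[n]^d$ such that $\mu_{\mathcal{D}_r}(j)=q_r(j)/N$ for positive integer $N$ and nonnegative integers $q_r(j)$. With $\Phi$, $f_{ext}$, $d_{ext}$ as defined in the context, for every $f:[n]^d\to\mathbb{R}$, $$\mathrm{dist}_{\mathcal{D}}(f,\mathcal{P}(d_{\mathcal{B}}))=\mathrm{dist}_{\mathcal{U}}(f_{ext},\mathcal{P}(d_{ext})),$$ where $\mathcal{U}$ is the uniform distribution on $[N]^d$.
   Context: A bounding family is a tuple of $2d$ functions $l_1,u_1,\dots,l_d,u_d:[n-1]\to\mathbb{R}$ with $l_r(y)<u_r(y)$; $d_{\mathcal{B}}(x,y)=\sum_{r:x_r>y_r}\sum_{t=y_r}^{x_r-1}u_r(t)-\sum_{r:x_r<y_r}\sum_{t=x_r}^{y_r-1}l_r(t)$. For a function $\delta$ on pairs of points of a domain $X$, $\mathcal{P}(\delta)$ is the set of $g:X\to\mathbb{R}$ with $g(x)-g(y)\le\delta(x,y)$ for all $x,y\in X$ (so $\mathcal{P}(d_{\mathcal{B}})$ is the set of $f$ with $l_r(x_r)\le f(x+\mathbf{e}_r)-f(x)\le u_r(x_r)$). For $t\in[N]$, $\phi_r(t)$ is the unique $\ell\in[n]$ with $\sum_{j<\ell}q_r(j)<t\le\sum_{j\le\ell}q_r(j)$, and $\Phi:[N]^d\to[n]^d$, $\Phi(x)=(\phi_1(x_1),\dots,\phi_d(x_d))$.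 Define $f_{ext}(x)=f(\Phi(x))$ and $d_{ext}(x,y)=d_{\mathcal{B}}(\Phi(x),\Phi(y))$ for $x,y\in[N]^d$. $\mathrm{dist}_{\mathcal{D}}(f,\mathcal{P})=\inf_{g\in\mathcal{P}}\Pr_{x\sim\mathcal{D}}[f(x)\ne g(x)]$. *)

From mathcomp Require Import all_boot all_order all_algebra.
From mathcomp Require Import all_classical all_reals.
From mathcomp Require Import ereal.
Set Implicit Arguments. Unset Strict Implicit. Unset Printing Implicit Defensive.
Import Order.TTheory GRing.Theory Num.Theory.
Local Open Scope ring_scope.
Local Open Scope classical_set_scope.

(* Conventions: [n] = {1,...,n} is represented 0-indexed by 'I_n, so a paper
   index i corresponds to i-1.  Points of [n]^d are {ffun 'I_d -> 'I_n}.
   The bounding functions l_r, u_r : [n-1] -> R are represented by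
   l r, u r : nat -> R, where only arguments t < n-1 are relevant
   (paper t+1 <-> our t). *)

Notation grid d n := {ffun 'I_d -> 'I_n}.

Definition dB {R : realType} {d n : nat} (l u : 'I_d -> nat -> R)
  (x y : grid d n) : R :=
  \sum_(r < d | (y r < x r)%N) \sum_(y r <= t < x r) u r t
  - \sum_(r < d | (x r < y r)%N) \sum_(x r <= t < y r) l r t.

Definition Pset {R : realType} {X : finType} (delta : X -> X -> R) : set (X -> R) :=
  [set g | forall x y : X, g x - g y <= delta x y].

Definition prob {R : realType} {X : finType} (mu : X -> R) (A : pred X) : R :=
  \sum_(x | A x) mu x.

(* dist_mu(f, P) = inf_{g in P} Pr_{x ~ mu}[f x <> g x] (in extended reals,
   so that the infimum of the empty set is +oo). *)
Definition dist {R : realType} {X : finType} (mu : X -> R) (f : X -> R)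
  (P : set (X -> R)) : \bar R :=
  ereal_inf [set (prob mu (fun x => f x != g x))%:E | g in P].

Definition muD {R : realType} {d n : nat} (q : 'I_d -> 'I_n -> nat) (N : nat)
  (x : grid d n) : R :=
  \prod_(r < d) ((q r (x r))%:R / N%:R).

Definition muU {R : realType} {d N : nat} (x : grid d N) : R := (N ^ d)%:R^-1.

(* phi_r(t): the unique l in [n] with sum_{j<l} q_r(j) < t <= sum_{j<=l} q_r(j).
   0-indexed: t' = t-1, l' = l-1, the condition reads
   sum_{j<l'} q(j) <= t' < sum_{j<=l'} q(j).  The default x0 is never used
   under the hypotheses of the theorem (the condition has a unique solution). *)
Definition phi {d n N : nat} (x0 : 'I_n) (q : 'I_d -> 'I_n -> nat) (r : 'I_d)
  (t : 'I_N) : 'I_n :=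
  odflt x0 [pick l : 'I_n | (\sum_(j < n | j < l) q r j <= t)%N
                            && (t < \sum_(j < n | j <= l) q r j)%N].

Definition Phi {d n N : nat} (x0 : 'I_n) (q : 'I_d -> 'I_n -> nat)
  (x : grid d N) : grid d n :=
  [ffun r => phi x0 q r (x r)].

Definition f_ext {R : realType} {d n N : nat} (x0 : 'I_n) (q : 'I_d -> 'I_n -> nat)
  (f : grid d n -> R) (x : grid d N) : R := f (Phi x0 q x).

Definition d_ext {R : realType} {d n N : nat} (x0 : 'I_n) (q : 'I_d -> 'I_n -> nat)
  (l u : 'I_d -> nat -> R) (x y : grid d N) : R :=
  dB l u (Phi x0 q x) (Phi x0 q y).

From mathcomp Require Import all_boot all_order all_algebra.
From mathcomp Require Import all_classical all_reals.
From mathcomp Require Import ereal.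
From mathcomp Require Import lra zify.
Import Order.TTheory GRing.Theory Num.Theory.
Set Implicit Arguments. Unset Strict Implicit.
Local Open Scope ring_scope.

(* Pulling back along [Phi] is measure preserving: the fibre of [Phi] over
   [y] has [prod_r q_r(y_r)] points, so the uniform measure on [N]^d pushes
   forward to [D].  Hence [g |-> g \o Phi] maps [P(d_B)] into [P(d_ext)]
   without changing the disagreement probability with [f].  Conversely, every
   [h] in [P(d_ext)] is constant on fibres and extends to
   [G x = min_x' (h x' + d_B(x, Phi x'))], which lies in [P(d_B)] because
   [d_B] is a reflexive quasi-metric, and satisfies [G \o Phi = h]. *)

Section PullbackDistance.
Variables (R : realType) (X Y : finType) (delta : X -> X -> R) (F : Y -> X).
Hypothesis delta_refl : forall x, delta x x = 0.
Hypothesis delta_triangle : forall x y z, delta x z <= delta x y + delta y z.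

Let deltaF (y y' : Y) := delta (F y) (F y').

Lemma Pset_comp (g : X -> R) : Pset delta g -> Pset deltaF (g \o F).
Proof. by move=> Pg y y'; apply: Pg. Qed.

Lemma Pset_extend (y0 : Y) (h : Y -> R) : Pset deltaF h ->
  exists2 G : X -> R, Pset delta G & forall y, G (F y) = h y.
Proof.
move=> Ph.
pose G x := \big[Order.min/h y0 + delta x (F y0)]_y (h y + delta x (F y)).
have G_ge x c : (forall y, c <= h y + delta x (F y)) -> c <= G x.
  move=> c_le; apply: (big_ind (fun v => c <= v)) => // a b ca cb.
  by rewrite le_min ca cb.
have G_le x y : G x <= h y + delta x (F y).
  by rewrite /G (bigD1 y) //= ge_min lexx.
exists G => [x x'|y].
  suff : G x - delta x x' <= G x' by lra.
  by apply: G_ge => y; have := G_le x y; have := delta_triangle x x' (F y); lra.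
apply/eqP; rewrite eq_le; apply/andP; split.
  by have := G_le (F y) y; rewrite delta_refl addr0.
by apply: G_ge => y'; have := Ph y y'; rewrite /deltaF; lra.
Qed.

Lemma dist_pullback (mu : X -> R) (nu : Y -> R) (y0 : Y) (f : X -> R) :
  (forall P : pred X, prob nu (fun y => P (F y)) = prob mu P) ->
  dist mu f (Pset delta) = dist nu (f \o F) (Pset deltaF).
Proof.
move=> nu_mu; rewrite /dist; congr ereal_inf; apply/seteqP; split.
  move=> _ [g Pg <-]; exists (g \o F); first exact: Pset_comp.
  by rewrite -(nu_mu (fun x => f x != g x)).
move=> _ [h Ph <-]; have [G PG GF] := Pset_extend y0 Ph.
exists G => //; rewrite -(nu_mu (fun x => f x != G x)).
by congr (_%:E); apply: eq_bigl => y /=; rewrite GF.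
Qed.

End PullbackDistance.

Section PrefixSums.
Variables (n : nat) (w : 'I_n -> nat).

Definition psum (k : nat) : nat := (\sum_(j < n | (j < k)%N) w j)%N.

Lemma psum_homo : {homo psum : k k' / (k <= k')%N}.
Proof.
move=> k k' le_kk'; rewrite /psum [X in (X <= _)%N]big_mkcond.
rewrite [X in (_ <= X)%N]big_mkcond /=; apply: leq_sum => j _.
by case: ifP => // /leq_trans ->.
Qed.

Lemma psum_le_total k : (psum k <= \sum_(j < n) w j)%N.
Proof. by rewrite /psum [X in (X <= _)%N]big_mkcond; apply: leq_sum => j _; case: ifP. Qed.

Lemma psum_total : psum n = (\sum_(j < n) w j)%N.
Proof. by apply: eq_bigl => j; rewrite ltn_ord. Qed.

Lemma psumS (j : 'I_n) : psum j.+1 = (psum j + w j)%N.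
Proof.
rewrite /psum (bigD1 j) //= addnC; congr (_ + _)%N.
by apply: eq_bigl => i; rewrite ltnS -val_eqE /= [(i < j)%N]ltn_neqAle andbC.
Qed.

Lemma psum_block_exists t : (t < \sum_(j < n) w j)%N ->
  exists j : 'I_n, (psum j <= t < psum j.+1)%N.
Proof.
rewrite -psum_total.
suff block k : (k <= n)%N -> (t < psum k)%N ->
    exists j : 'I_n, (psum j <= t < psum j.+1)%N by exact: block.
elim: k => [|k IHk] le_kn t_lt; first by rewrite /psum big_pred0 in t_lt.
have [t_lt_k|t_ge] := ltnP t (psum k); first exact: IHk (ltnW le_kn) t_lt_k.
by exists (Ordinal le_kn); rewrite /= t_ge t_lt.
Qed.

Lemma psum_block_unique t (a b : nat) :
  (psum a <= t < psum a.+1)%N -> (psum b <= t < psum b.+1)%N -> a = b.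
Proof.
wlog le_ab : a b / (a <= b)%N.
  by move=> wlog_ab ha hb; case: (leqP a b) => [|/ltnW] /wlog_ab ->.
move=> /andP[_ t_lt_a] /andP[t_ge_b _]; apply/eqP; rewrite eqn_leq le_ab /=.
by rewrite leqNgt; apply: contraL t_lt_a => /psum_homo le; rewrite -leqNgt (leq_trans le).
Qed.

End PrefixSums.

Section Discretisation.
Variables (R : realType) (d n N : nat) (x0 : 'I_n) (q : 'I_d -> 'I_n -> nat).
Hypothesis q_total : forall r, (\sum_(j < n) q r j)%N = N.

Lemma phi_eq r (t : 'I_N) (j : 'I_n) :
  (phi x0 q r t == j) = (psum (q r) j <= t < psum (q r) j.+1)%N.
Proof.
have block (k : 'I_n) : ((\sum_(j < n | (j < k)%N) q r j <= t)%N
                         && (t < \sum_(j < n | (j <= k)%N) q r j)%N)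
                        = (psum (q r) k <= t < psum (q r) k.+1)%N.
  by congr (_ && (t < _)%N); apply: eq_bigl => i; rewrite ltnS.
rewrite /phi; case: pickP => [k | no_block] /=.
  rewrite block => hk; apply/eqP/idP => [<- //|hj].
  by apply: val_inj; apply: psum_block_unique hk hj.
have [k hk] : exists k : 'I_n, (psum (q r) k <= t < psum (q r) k.+1)%N.
  by apply: psum_block_exists; rewrite q_total.
by move: (no_block k); rewrite block hk.
Qed.

Lemma sum_phi_fiber r (j : 'I_n) :
  \sum_(t < N) ((phi x0 q r t == j)%:R : R) = (q r j)%:R.
Proof.
under eq_bigr => t _ do rewrite phi_eq.
set a := psum (q r) j; set b := psum (q r) j.+1.
have le_ab : (a <= b)%N by rewrite /b psumS leq_addr.
have le_bN : (b <= N)%N by rewrite -(q_total r) psum_le_total.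
rewrite -(big_mkord xpredT (fun t => ((a <= t < b)%N%:R : R))).
rewrite (@big_cat_nat _ _ _ a 0 N) ?(leq_trans le_ab) //=.
rewrite (@big_cat_nat _ _ _ b a N) //=.
rewrite [X in X + _](eq_big_nat _ _ (F2 := fun=> 0)); last first.
  by move=> t /andP[_ t_lt_a]; rewrite leqNgt t_lt_a.
rewrite [X in _ + (_ + X)](eq_big_nat _ _ (F2 := fun=> 0)); last first.
  by move=> t /andP[t_ge_b _]; rewrite ltnNge t_ge_b andbF.
rewrite [X in _ + (X + _)](eq_big_nat _ _ (F2 := fun=> 1)) => [|t ->//].
by rewrite !sumr_const_nat !mul0rn add0r addr0 /b psumS addnC addnK.
Qed.

Lemma Phi_indicator (x : grid d N) (y : grid d n) :
  ((Phi x0 q x == y)%:R : R) = \prod_(r < d) ((phi x0 q r (x r) == y r)%:R : R).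
Proof.
have [/forallP all_eq | /forallPn [r neq_r]] :=
  boolP [forall r, phi x0 q r (x r) == y r].
  have -> : Phi x0 q x = y by apply/ffunP => r; rewrite ffunE; apply/eqP.
  by rewrite eqxx big1 // => r _; rewrite all_eq.
rewrite (bigD1 r) //= (negbTE neq_r) mul0r.
by case: eqP => // Phi_xy; move: neq_r; rewrite -Phi_xy ffunE eqxx.
Qed.

Lemma sum_Phi (G : grid d n -> R) :
  \sum_(x : grid d N) G (Phi x0 q x)
  = \sum_(y : grid d n) G y * \prod_(r < d) ((q r (y r))%:R : R).
Proof.
transitivity (\sum_(x : grid d N) \sum_(y : grid d n) ((Phi x0 q x == y)%:R * G y)).
  apply: eq_bigr => x _; rewrite (bigD1 (Phi x0 q x)) //= eqxx mul1r big1 ?addr0 //.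
  by move=> y; rewrite eq_sym => /negbTE->; rewrite mul0r.
rewrite exchange_big; apply: eq_bigr => y _; rewrite -big_distrl /= mulrC.
congr (_ * _); under eq_bigr => x _ do rewrite Phi_indicator.
rewrite -(bigA_distr_bigA (fun r (t : 'I_N) => ((phi x0 q r t == y r)%:R : R))).
by apply: eq_bigr => r _; apply: sum_phi_fiber.
Qed.

Lemma muDE (y : grid d n) :
  muD q N y = (\prod_(r < d) ((q r (y r))%:R : R)) / (N ^ d)%:R.
Proof. by rewrite /muD big_split /= prodr_const card_ord natrX exprVn. Qed.

Lemma prob_Phi (P : pred (grid d n)) :
  prob (@muU R d N) (fun x => P (Phi x0 q x)) = prob (muD q N) P.
Proof.
rewrite /prob big_mkcond [RHS]big_mkcond /=.
rewrite (sum_Phi (fun y => if P y then (N ^ d)%:R^-1 else 0)).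
by apply: eq_bigr => y _; case: (P y); rewrite ?mul0r // muDE mulrC.
Qed.

End Discretisation.

Section BoundingDistance.
Variable R : realType.

(* The one-dimensional [d_B] between [a] and [b], written through prefix sums
   of [u] (upward steps) and [l] (downward steps). *)
Definition dcoord (l u : nat -> R) (a b : nat) : R :=
  if (b < a)%N then \sum_(0 <= t < a) u t - \sum_(0 <= t < b) u t
  else \sum_(0 <= t < a) l t - \sum_(0 <= t < b) l t.

Lemma sumrB_nat (g : nat -> R) a b : (a <= b)%N ->
  \sum_(0 <= t < b) g t - \sum_(0 <= t < a) g t = \sum_(a <= t < b) g t.
Proof. by move=> le_ab; rewrite (@big_cat_nat _ _ _ a 0 b) //= addrC addrK. Qed.

Lemma dcoord_triangle n (l u : nat -> R) :
  (forall t, (t < n.-1)%N -> l t < u t) ->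
  forall a b c, (a < n)%N -> (b < n)%N -> (c < n)%N ->
  dcoord l u a c <= dcoord l u a b + dcoord l u b c.
Proof.
move=> lt_lu.
have seg_le a b : (a <= b)%N -> (b < n)%N ->
    \sum_(a <= t < b) l t <= \sum_(a <= t < b) u t.
  move=> le_ab b_lt; apply: ler_sum_nat => t /andP[_ t_lt]; apply/ltW/lt_lu; lia.
have ge_u a b : (a < n)%N -> (b < n)%N ->
    \sum_(0 <= t < a) u t - \sum_(0 <= t < b) u t <= dcoord l u a b.
  move=> a_lt b_lt; rewrite /dcoord; case: ltnP => // le_ab.
  by rewrite -[leLHS]opprB -[leRHS]opprB !sumrB_nat // lerN2 seg_le.
have ge_l a b : (a < n)%N -> (b < n)%N ->
    \sum_(0 <= t < a) l t - \sum_(0 <= t < b) l t <= dcoord l u a b.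
  move=> a_lt b_lt; rewrite /dcoord; case: ltnP => // /ltnW le_ba.
  by rewrite !sumrB_nat // seg_le.
move=> a b c a_lt b_lt c_lt.
have := ge_u _ _ a_lt b_lt; have := ge_u _ _ b_lt c_lt.
have := ge_l _ _ a_lt b_lt; have := ge_l _ _ b_lt c_lt.
by rewrite [dcoord l u a c]/dcoord; case: ifP => _; lra.
Qed.

Lemma dB_dcoord d n (l u : 'I_d -> nat -> R) (x y : grid d n) :
  dB l u x y = \sum_(r < d) dcoord (l r) (u r) (x r) (y r).
Proof.
rewrite /dB [X in X - _]big_mkcond [X in _ - X]big_mkcond -sumrB.
apply: eq_bigr => r _ /=; rewrite /dcoord.
case: ltngtP => [lt|lt|->]; last by rewrite !subrr.
- by rewrite subr0 sumrB_nat // ltnW.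
- by rewrite sub0r -[RHS]opprB sumrB_nat // ltnW.
Qed.

Lemma dB_refl d n (l u : 'I_d -> nat -> R) (x : grid d n) : dB l u x x = 0.
Proof. by rewrite dB_dcoord big1 // => r _; rewrite /dcoord ltnn subrr. Qed.

Lemma dB_triangle d n (l u : 'I_d -> nat -> R) :
  (forall r t, (t < n.-1)%N -> l r t < u r t) ->
  forall x y z : grid d n, dB l u x z <= dB l u x y + dB l u y z.
Proof.
move=> lt_lu x y z; rewrite !dB_dcoord -big_split /=; apply: ler_sum => r _.
exact: (dcoord_triangle (lt_lu r)).
Qed.

End BoundingDistance.

Theorem theorem3p8 (R : realType) (d n N : nat) (hn : (0 < n)%N)
  (l u : 'I_d -> nat -> R)
  (hlu : forall (r : 'I_d) (t : nat), (t < n.-1)%N -> l r t < u r t)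
  (q : 'I_d -> 'I_n -> nat)
  (hN : (0 < N)%N)
  (hq : forall r : 'I_d, (\sum_(j < n) q r j)%N = N)
  (f : grid d n -> R) :
  dist (muD q N) f (Pset (dB l u))
  = dist (@muU R d N) (f_ext (Ordinal hn) q f) (Pset (d_ext (Ordinal hn) q l u)).
Proof.
apply: (dist_pullback (dB_refl l u) (dB_triangle hlu) [ffun=> Ordinal hN]).
exact: prob_Phi.
Qed.
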